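(* Let $G$ be a finite abelian group and $M$ a (small) category. Then the category $\mathrm{Fun}(M,\mathrm{Vect}_{\hat G})$ of all functors $M\to\mathrm{Vect}_{\hat G}$, with natural transformations as morphisms, is proto-abelian. If $M$ is finite (finitely many objects and finitely many morphisms), then $\mathrm{Fun}(M,\mathrm{Vect}_{\hat G})$ is finitary.
   Context: $\hat G=G\sqcup\{0\}$ with $0$ absorbing. $\mathrm{Vect}_{\hat G}$ has as objects finite pointed sets $(V,0_V)$ with an action of the monoid $\hat G$ ($0v=0_V$, $g0_V=0_V$) such that $G$ acts freely on $V\setminus\{0_V\}$; morphisms $f:V\to W$ satisfy $f(0_V)=0_W$, $f(gv)=gf(v)$, and $f(v_1)=f(v_2)\neq0_W\Rightarrow Gv_1=Gv_2$. A category with zero object and classes $\mathfrak M,\mathfrak E$ is proto-exact if: $0\to X\in\mathfrak M$, $X\to0\in\mathfrak E$; $\mathfrak M,\mathfrak E$ contain isomorphisms and are closed under composition; a commutative square with two parallel maps in $\mathfrak M$ and the other two in $\mathfrak E$ is a pullback iff it is a pushout; any cospan $X'\hookrightarrow Y'\twoheadleftarrow Y$ (mono in $\mathfrak M$, epi in $\mathfrak E$) and any span $X'\twoheadleftarrow X\hookrightarrow Y$ can be completed to such a bi-Cartesian square. Proto-abelian: $\mathfrak M$ = all monomorphisms, $\mathfrak E$ = all epimorphisms. Finitary: all Hom-sets and all $\mathrm{Ext}$-sets (equivalence classes of admissible short exact sequences $A\hookrightarrow B\twoheadrightarrow C$, i.e. bi-Cartesian squares with $0$ in the corner, modulo isomorphisms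 of the middle term compatible with the maps) are finite. *)

From HB Require Import structures.
From mathcomp Require Import all_boot all_fingroup.
From Stdlib Require List.

Set Implicit Arguments.
Unset Strict Implicit.
Unset Printing Implicit Defensive.

Local Open Scope group_scope.

Record CatData := {
  cobj :> Type;
  chom : cobj -> cobj -> Type;
  cheq : forall a b, chom a b -> chom a b -> Prop;
  cid : forall a, chom a a;
  ccomp : forall a b c, chom b c -> chom a b -> chom a c  (* ccomp g f = g o f *)
}.
Arguments chom {_}.
Arguments cheq {_ _ _}.
Arguments cid {_}.
Arguments ccomp {_ _ _ _}.

Section CatNotions.
Variable C : CatData.

Definition is_mono (a b : C) (f : chom a b) : Prop :=
  forall (x : C) (g h : chom x a), cheq (ccomp f g) (ccomp f h) -> cheq g h.

Definition is_epi (a b : C) (f : chom a b) : Prop :=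
  forall (x : C) (g h : chom b x), cheq (ccomp g f) (ccomp h f) -> cheq g h.

Definition is_iso (a b : C) (f : chom a b) : Prop :=
  exists g : chom b a, cheq (ccomp g f) (cid a) /\ cheq (ccomp f g) (cid b).

Definition is_zero_obj (z : C) : Prop :=
  forall x : C,
    (exists f : chom z x, forall g : chom z x, cheq g f) /\
    (exists f : chom x z, forall g : chom x z, cheq g f).

(* The square
       X  --i-->  Y
       |p         |q
       v          v
       X' --j-->  Y'                                                     *)
Definition comm_sq (X Y X' Y' : C) (i : chom X Y) (p : chom X X')
  (q : chom Y Y') (j : chom X' Y') : Prop :=
  cheq (ccomp q i) (ccomp j p).

Definition is_pullback (X Y X' Y' : C) (i : chom X Y) (p : chom X X')
  (q : chom Y Y') (j : chom X' Y') : Prop :=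
  comm_sq i p q j /\
  forall (W : C) (u : chom W Y) (v : chom W X'),
    cheq (ccomp q u) (ccomp j v) ->
    exists w : chom W X,
      (cheq (ccomp i w) u /\ cheq (ccomp p w) v) /\
      forall w' : chom W X, cheq (ccomp i w') u -> cheq (ccomp p w') v ->
        cheq w' w.

Definition is_pushout (X Y X' Y' : C) (i : chom X Y) (p : chom X X')
  (q : chom Y Y') (j : chom X' Y') : Prop :=
  comm_sq i p q j /\
  forall (W : C) (u : chom Y W) (v : chom X' W),
    cheq (ccomp u i) (ccomp v p) ->
    exists w : chom Y' W,
      (cheq (ccomp w q) u /\ cheq (ccomp w j) v) /\
      forall w' : chom Y' W, cheq (ccomp w' q) u -> cheq (ccomp w' j) v ->
        cheq w' w.

Definition is_bicartesian (X Y X' Y' : C) (i : chom X Y) (p : chom X X')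
  (q : chom Y Y') (j : chom X' Y') : Prop :=
  is_pullback i p q j /\ is_pushout i p q j.

Definition morph_class := forall a b : C, chom a b -> Prop.

Definition proto_exact (Mc Ec : morph_class) : Prop :=
  (exists z : C, is_zero_obj z /\
     (forall (x : C) (f : chom z x), Mc _ _ f) /\
     (forall (x : C) (f : chom x z), Ec _ _ f)) /\
  (forall (a b : C) (f : chom a b), is_iso f -> Mc _ _ f /\ Ec _ _ f) /\
  (forall (a b c : C) (f : chom a b) (g : chom b c),
     Mc _ _ f -> Mc _ _ g -> Mc _ _ (ccomp g f)) /\
  (forall (a b c : C) (f : chom a b) (g : chom b c),
     Ec _ _ f -> Ec _ _ g -> Ec _ _ (ccomp g f)) /\
  (forall (X Y X' Y' : C) (i : chom X Y) (p : chom X X') (q : chom Y Y')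
          (j : chom X' Y'),
     Mc _ _ i -> Mc _ _ j -> Ec _ _ p -> Ec _ _ q -> comm_sq i p q j ->
     (is_pullback i p q j <-> is_pushout i p q j)) /\
  (forall (Y X' Y' : C) (q : chom Y Y') (j : chom X' Y'),
     Mc _ _ j -> Ec _ _ q ->
     exists (X : C) (i : chom X Y) (p : chom X X'),
       Mc _ _ i /\ Ec _ _ p /\ is_bicartesian i p q j) /\
  (forall (X Y X' : C) (i : chom X Y) (p : chom X X'),
     Mc _ _ i -> Ec _ _ p ->
     exists (Y' : C) (q : chom Y Y') (j : chom X' Y'),
       Mc _ _ j /\ Ec _ _ q /\ is_bicartesian i p q j).

Definition proto_abelian : Prop := proto_exact is_mono is_epi.

Definition hom_finite (a b : C) : Prop :=
  exists l : list (chom a b), forall f : chom a b,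
    exists g, List.In g l /\ cheq f g.

Record ses_data (A Cc : C) := SesData {
  ses_mid : C;
  ses_i : chom A ses_mid;
  ses_p : chom ses_mid Cc
}.

(* admissible short exact sequence: bicartesian square with 0 in the corner
       A --i--> B
       |        |p
       v        v
       0 -----> C                                                        *)
Definition is_adm_ses (Mc Ec : morph_class) (z : C) (A Cc : C)
  (s : ses_data A Cc) : Prop :=
  Mc _ _ (ses_i s) /\ Ec _ _ (ses_p s) /\
  exists (u : chom A z) (v : chom z Cc),
    is_bicartesian (ses_i s) u (ses_p s) v.

Definition ses_equiv (A Cc : C) (s t : ses_data A Cc) : Prop :=
  exists phi : chom (ses_mid s) (ses_mid t),
    is_iso phi /\ cheq (ccomp phi (ses_i s)) (ses_i t) /\
    cheq (ccomp (ses_p t) phi) (ses_p s).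

Definition ext_finite (Mc Ec : morph_class) (z : C) (A Cc : C) : Prop :=
  exists l : list (ses_data A Cc),
    (forall s, List.In s l -> is_adm_ses Mc Ec z s) /\
    forall s, is_adm_ses Mc Ec z s ->
      exists t, List.In t l /\ ses_equiv s t.

Definition finitary (Mc Ec : morph_class) : Prop :=
  (forall a b : C, hom_finite a b) /\
  (forall z : C, is_zero_obj z -> forall A Cc : C, ext_finite Mc Ec z A Cc).

End CatNotions.

Section Vect.
Variable gT : finGroupType.

(* finite pointed set with a \hat G action (0 acts by the constant map to
   the base point, which needs no data), G acting freely off the base point *)
Record VObj := {
  vcar : finType;
  vzero : vcar;
  vact : gT -> vcar -> vcar;
  vact1 : forall v, vact 1 v = v;
  vactM : forall g h v, vact (g * h) v = vact g (vact h v);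
  vact0 : forall g, vact g vzero = vzero;
  vfree : forall g v, v <> vzero -> vact g v = v -> g = 1
}.

Record VMor (V W : VObj) := {
  vfun : vcar V -> vcar W;
  vfun0 : vfun (vzero V) = vzero W;
  vfunE : forall g v, vfun (vact g v) = vact g (vfun v);
  vfun_orb : forall v1 v2, vfun v1 = vfun v2 -> vfun v1 <> vzero W ->
               exists g, v1 = vact g v2
}.

Definition VMor_id (V : VObj) : VMor V V.
Proof.
refine (@Build_VMor V V (fun v => v) _ _ _) => //.
by move=> v1 v2 -> _; exists 1; rewrite vact1.
Defined.

Definition VMor_comp (U V W : VObj) (g : VMor V W) (f : VMor U V) : VMor U W.
Proof.
refine (@Build_VMor U W (fun x => vfun g (vfun f x)) _ _ _).
- by rewrite !vfun0.
- by move=> h v; rewrite !vfunE.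
- move=> v1 v2 e nz.
  have nzf : vfun f v1 <> vzero V.
    by move=> ef; apply: nz; rewrite ef vfun0.
  have [h eh] := vfun_orb e nz.
  have e2 : vfun f v1 = vfun f (vact h v2) by rewrite vfunE.
  have [k ek] := vfun_orb e2 nzf.
  by exists (k * h); rewrite vactM.
Defined.

End Vect.

Record SCat := {
  sobj : Type;
  shom : sobj -> sobj -> Type;
  sid : forall a, shom a a;
  scomp : forall a b c, shom b c -> shom a b -> shom a c;
  scomp1l : forall a b (f : shom a b), scomp (sid b) f = f;
  scomp1r : forall a b (f : shom a b), scomp f (sid a) = f;
  scompA : forall a b c d (f : shom a b) (g : shom b c) (h : shom c d),
      scomp h (scomp g f) = scomp (scomp h g) f
}.
Arguments shom {s}.
Arguments sid {s}.
Arguments scomp {s a b c}.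

Definition finite_type (T : Type) : Prop :=
  exists l : list T, forall x : T, List.In x l.

Definition finite_scat (M : SCat) : Prop :=
  finite_type (sobj M) /\ forall a b : sobj M, finite_type (shom a b).

Section FunCat.
Variables (gT : finGroupType) (M : SCat).

Record VFun := {
  fobj : sobj M -> VObj gT;
  fmor : forall a b : sobj M, shom a b -> VMor (fobj a) (fobj b);
  fmor_id : forall a x, vfun (fmor (sid a)) x = x;
  fmor_comp : forall a b c (f : shom a b) (g : shom b c) x,
      vfun (fmor (scomp g f)) x = vfun (fmor g) (vfun (fmor f) x)
}.
Arguments fmor _ {a b}.

Record VNat (F F' : VFun) := {
  ntc : forall a, VMor (fobj F a) (fobj F' a);
  ntnat : forall a b (f : shom a b) x,
      vfun (ntc b) (vfun (fmor F f) x) = vfun (fmor F' f) (vfun (ntc a) x)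
}.

Definition VNat_eq (F F' : VFun) (s t : VNat F F') : Prop :=
  forall a x, vfun (ntc s a) x = vfun (ntc t a) x.

Definition VNat_id (F : VFun) : VNat F F.
Proof. by refine (@Build_VNat F F (fun a => VMor_id _) _). Defined.

Definition VNat_comp (F F' F'' : VFun) (t : VNat F' F'') (s : VNat F F') :
  VNat F F''.
Proof.
refine (@Build_VNat F F'' (fun a => VMor_comp (ntc t a) (ntc s a)) _).
by move=> a b f x /=; rewrite ntnat ntnat.
Defined.

Definition FunCat : CatData :=
  {| cobj := VFun; chom := VNat; cheq := VNat_eq; cid := VNat_id;
     ccomp := VNat_comp |}.

End FunCat.

(* Monomorphisms and epimorphisms of functors into Vect_Ĝ are exactly the
   pointwise injective and surjective natural transformations: test a mono
   against the inclusion of its kernel subfunctor, an epi against the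
   projection onto the quotient by its image.  For a commutative square with
   monos i, j and epis p, q, the pullback and the pushout property are both
   equivalent to the set-level condition q⁻¹(im j) ⊆ im i; the missing corners
   are the subfunctor q⁻¹(im j) of Y, resp. the quotient Y / i(ker p).

   When M is finite, a natural transformation is a finite family of maps
   between finite sets, and an admissible extension A ↪ B ↠ C is determined up
   to isomorphism by how the maps B(f) move chosen lifts of the points of C,
   written in the coordinates B(a) = A(a) ⊔ (C(a) ∖ 0).  This is finitely much
   data, so Hom- and Ext-sets are finite. *)

From HB Require Import structures.
From mathcomp Require Import all_boot all_fingroup.
From Stdlib Require Import ClassicalEpsilon.
From Stdlib Require List.

Set Implicit Arguments.
Unset Strict Implicit.
Unset Printing Implicit Defensive.
Local Open Scope group_scope.

Section VectFacts.
Variable gT : finGroupType.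
Implicit Types U V W : VObj gT.

Lemma vactK V g (v : vcar V) : vact g^-1 (vact g v) = v.
Proof. by rewrite -vactM mulVg vact1. Qed.

Lemma vfun_inj_nz V W (f : VMor V W) v1 v2 :
  vfun f v1 = vfun f v2 -> vfun f v1 <> vzero W -> v1 = v2.
Proof.
move=> e nz; have [g eg] := vfun_orb e nz.
have g1 : g = 1 by apply: (vfree nz); rewrite {2}eg vfunE -e.
by rewrite eg g1 vact1.
Qed.

Lemma vfun_eq_ker_sub U V W (q : VMor U V) (u : VMor U W) :
  (forall y, vfun q y = vzero V -> vfun u y = vzero W) ->
  forall y1 y2, vfun q y1 = vfun q y2 -> vfun u y1 = vfun u y2.
Proof.
move=> qu y1 y2 e; have [q1|nz] := eqVneq (vfun q y1) (vzero V).
  by rewrite (qu y1 q1) (qu y2) // -e.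
by rewrite (vfun_inj_nz e) //; apply/eqP.
Qed.

Lemma vfun_inj_ker0 V W (f : VMor V W) :
  (forall v, vfun f v = vzero W -> v = vzero V) -> injective (vfun f).
Proof. exact: (@vfun_eq_ker_sub _ _ _ f (VMor_id V)). Qed.

Definition VMor0 V W : VMor V W.
Proof.
refine (@Build_VMor gT V W (fun _ => vzero W) _ _ _) => //.
by move=> g v; rewrite vact0.
Defined.

Definition VUnit : VObj gT.
Proof.
refine (@Build_VObj gT unit tt (fun _ _ => tt) _ _ _ _) => //.
- by case.
- by move=> g [] [].
Defined.

End VectFacts.

Section FunctorCategory.
Variables (gT : finGroupType) (M : SCat).
Local Notation VF := (VFun gT M).
Local Notation C := (FunCat gT M).
Local Notation ap t a := (vfun (ntc t a)).
Local Notation fm F f := (vfun (fmor F f)).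

Definition VNat0 (F F' : VF) : VNat F F'.
Proof.
refine (@Build_VNat gT M F F' (fun a => VMor0 _ _) _).
by move=> a b f x /=; rewrite vfun0.
Defined.

Definition VFun0 : VF.
Proof.
by refine (@Build_VFun gT M (fun _ => VUnit gT) (fun a b f => VMor_id _) _ _).
Defined.

(** * Subfunctors and quotient functors *)

Local Unset Implicit Arguments.
Record subfunctor (Y : VF) := Subfunctor {
  sf_mem : forall a, pred (vcar (fobj Y a));
  sf_mem0 : forall a, sf_mem a (vzero _);
  sf_memJ : forall a g y, sf_mem a y -> sf_mem a (vact g y);
  sf_memF : forall a b (f : shom a b) y, sf_mem a y -> sf_mem b (fm Y f y)
}.
Local Set Implicit Arguments.
Coercion sf_mem : subfunctor >-> Funclass.
Arguments sf_mem0 {Y} s a.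
Arguments sf_memJ {Y} s {a} g {y}.
Arguments sf_memF {Y} s {a b} f {y}.

Definition sf_zero (Y : VF) : subfunctor Y.
Proof.
refine (@Subfunctor Y (fun a y => y == vzero _) _ _ _) => //.
- by move=> a g y /eqP ->; rewrite vact0.
- by move=> a b f y /eqP ->; rewrite vfun0.
Defined.

Definition sf_image (F Y : VF) (t : VNat F Y) : subfunctor Y.
Proof.
refine (@Subfunctor Y (fun a y => [exists x, ap t a x == y]) _ _ _).
- by move=> a; apply/existsP; exists (vzero _); rewrite vfun0.
- move=> a g y /existsP [x /eqP <-]; apply/existsP; exists (vact g x).
  by rewrite vfunE.
- move=> a b f y /existsP [x /eqP <-]; apply/existsP; exists (fm F f x).
  by rewrite ntnat.
Defined.

Lemma sf_imageP (F Y : VF) (t : VNat F Y) a y :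
  reflect (exists x, ap t a x = y) (sf_image t a y).
Proof. by apply: (iffP existsP) => -[x /eqP]; exists x. Qed.

Definition sf_preimage (F Y : VF) (t : VNat F Y) (S : subfunctor Y) :
  subfunctor F.
Proof.
refine (@Subfunctor F (fun a x => S a (ap t a x)) _ _ _) => /=.
- by move=> a; rewrite vfun0 sf_mem0.
- by move=> a g x Sx; rewrite vfunE sf_memJ.
- by move=> a b f x Sx; rewrite ntnat sf_memF.
Defined.

Section Subobject.
Variables (Y : VF) (S : subfunctor Y).

Definition SubObj (a : sobj M) : VObj gT.
Proof.
refine (@Build_VObj gT {y : vcar (fobj Y a) | S a y}
  (exist _ (vzero _) (sf_mem0 S a))
  (fun g e => exist _ (vact g (val e)) (sf_memJ S g (valP e))) _ _ _ _).
- by move=> [v h]; apply: val_inj; rewrite /= vact1.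
- by move=> g h [v hv]; apply: val_inj; rewrite /= vactM.
- by move=> g; apply: val_inj; rewrite /= vact0.
- move=> g [v hv] ne eq; apply: (@vfree _ _ g v); last exact: (congr1 val eq).
  by move=> e; apply: ne; apply: val_inj.
Defined.

Definition SubMor a b (f : shom a b) : VMor (SubObj a) (SubObj b).
Proof.
refine (@Build_VMor gT (SubObj a) (SubObj b)
  (fun e => exist _ (fm Y f (val e)) (sf_memF S f (valP e))) _ _ _).
- by apply: val_inj; rewrite /= vfun0.
- by move=> g e; apply: val_inj; rewrite /= vfunE.
- move=> e1 e2 /(congr1 val) eq nz.
  have [|g eg] := vfun_orb eq; last by exists g; apply: val_inj.
  by move=> h; apply: nz; apply: val_inj.
Defined.

Definition SubF : VF.
Proof.
refine (@Build_VFun gT M SubObj SubMor _ _).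
- by move=> a x; apply: val_inj; rewrite /= fmor_id.
- by move=> a b c f g x; apply: val_inj; rewrite /= fmor_comp.
Defined.

Definition SubInclMor (a : sobj M) : VMor (SubObj a) (fobj Y a).
Proof.
refine (@Build_VMor gT (SubObj a) (fobj Y a) val _ _ _) => //.
by move=> v1 v2 e _; exists 1; rewrite vact1; apply: val_inj.
Defined.

Definition SubIncl : VNat SubF Y.
Proof. by refine (@Build_VNat gT M SubF Y SubInclMor _). Defined.

End Subobject.

Section Quotient.
Variables (Y : VF) (S : subfunctor Y).

Lemma sf_memNJ a g y : ~~ S a y -> ~~ S a (vact g y).
Proof. by apply: contra => h; rewrite -(vactK g y); apply: sf_memJ. Qed.

Lemma sf_memN_nz a (y : vcar (fobj Y a)) : ~~ S a y -> y <> vzero _.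
Proof. by move=> h e; move: h; rewrite e sf_mem0. Qed.

(* The quotient [Y a / S a] collapses [S a] to the base point [None]. *)
Local Notation qT a := (option {y : vcar (fobj Y a) | ~~ S a y}).

Definition qact (a : sobj M) g (q : qT a) : qT a :=
  omap (fun e => exist _ (vact g (val e)) (sf_memNJ g (valP e))) q.

Definition QuotObj (a : sobj M) : VObj gT.
Proof.
refine (@Build_VObj gT (qT a) None (@qact a) _ _ _ _) => //.
- by case=> // -[v h]; congr Some; apply: val_inj; rewrite /= vact1.
- by move=> g h [[v hv]|] //; congr Some; apply: val_inj; rewrite /= vactM.
- move=> g [[v hv]|] // _ eq; apply: (@vfree _ _ g v (sf_memN_nz hv)).
  by case: eq.
Defined.

Lemma insub_vact a g (y : vcar (fobj Y a)) :
  (insub (vact g y) : qT a) = qact g (insub y).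
Proof.
have [Sy|nSy] := boolP (S a y).
  by rewrite !insubN ?negbK // sf_memJ.
rewrite (insubT (fun y => ~~ S a y) nSy).
rewrite (insubT (fun y => ~~ S a y) (sf_memNJ g nSy)) /=.
by congr Some; apply: val_inj.
Qed.

Lemma insub_fmor a b (f : shom a b) (y : vcar (fobj Y a)) :
  (insub (fm Y f y) : qT b) =
  if (insub y : qT a) is Some e then insub (fm Y f (val e)) else None.
Proof.
have [Sy|nSy] := boolP (S a y); last by rewrite (insubT (fun y => ~~ S a y) nSy).
by rewrite !insubN ?negbK // sf_memF.
Qed.

Lemma insub_Some a (y : vcar (fobj Y a)) e : (insub y : qT a) = Some e -> val e = y.
Proof. by case: insubP => // u _ <- [<-]. Qed.

Definition qmor a b (f : shom a b) (q : qT a) : qT b :=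
  if q is Some e then insub (fm Y f (val e)) else None.

Definition QuotMor a b (f : shom a b) : VMor (QuotObj a) (QuotObj b).
Proof.
refine (@Build_VMor gT (QuotObj a) (QuotObj b) (@qmor a b f) _ _ _) => //.
- by move=> g [[v hv]|] //=; rewrite vfunE insub_vact.
- move=> [e1|] [e2|] //= eq nz; try by [case: nz | rewrite eq in nz].
  case E: (insub _) nz eq => [e|] // _ E2.
  have h1 := insub_Some E; have h2 := insub_Some (esym E2).
  have nz' : fm Y f (val e1) <> vzero _ by rewrite -h1; apply: sf_memN_nz (valP e).
  have [g eg] := vfun_orb (etrans (esym h1) h2) nz'.
  by exists g; congr Some; apply: val_inj.
Defined.

Definition QuotF : VF.
Proof.
refine (@Build_VFun gT M QuotObj QuotMor _ _).
- by move=> a [e|] //=; rewrite fmor_id valK.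
- by move=> a b c f g [e|] //=; rewrite fmor_comp insub_fmor.
Defined.

Definition QuotPiMor (a : sobj M) : VMor (fobj Y a) (QuotObj a).
Proof.
refine (@Build_VMor gT (fobj Y a) (QuotObj a) insub _ _ _).
- by rewrite insubN // negbK sf_mem0.
- by move=> g v; rewrite insub_vact.
- move=> v1 v2 e nz; exists 1; rewrite vact1.
  case E: (insub v1) nz e => [u|] // _ E2.
  by rewrite -(insub_Some E) (insub_Some (esym E2)).
Defined.

Definition QuotPi : VNat Y QuotF.
Proof.
by refine (@Build_VNat gT M Y QuotF QuotPiMor _) => a b f x /=; rewrite insub_fmor.
Defined.

Lemma QuotPi_eq0 a y : ap QuotPi a y = vzero _ <-> S a y.
Proof.
split=> [|h] /=; last by rewrite insubN // negbK.
by case: insubP => // /negPn.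
Qed.

Lemma QuotPi_eq a y1 y2 : ap QuotPi a y1 = ap QuotPi a y2 ->
  y1 = y2 \/ (S a y1 /\ S a y2).
Proof.
case E: (ap QuotPi a y1) => [e|] E2.
  by left; rewrite -(insub_Some E) (insub_Some (esym E2)).
by right; split; apply/QuotPi_eq0.
Qed.

Lemma QuotPi_surj a (q : vcar (fobj QuotF a)) : exists y, ap QuotPi a y = q.
Proof.
case: q => [e|]; first by exists (val e); rewrite /= valK.
by exists (vzero _); apply/QuotPi_eq0/sf_mem0.
Qed.

End Quotient.

(** * Monomorphisms, epimorphisms and bicartesian squares *)

Definition pointwise_inj (F F' : VF) (t : VNat F F') : Prop :=
  forall a, injective (ap t a).

Definition pointwise_surj (F F' : VF) (t : VNat F F') : Prop :=
  forall a y, exists x, ap t a x = y.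

Section LiftAlongInjective.
Variables (X Y W : VF) (i : VNat X Y) (u : VNat W Y).
Local Unset Implicit Arguments.
Hypotheses (i_inj : pointwise_inj i)
  (u_im : forall a w, exists x, ap i a x = ap u a w).
Local Set Implicit Arguments.

Definition lift_fun (a : sobj M) (w : vcar (fobj W a)) : vcar (fobj X a) :=
  if [pick x | ap i a x == ap u a w] is Some x then x else vzero _.

Lemma lift_funE a w : ap i a (lift_fun w) = ap u a w.
Proof.
rewrite /lift_fun; case: pickP => [x /eqP //|none].
by have [x hx] := u_im a w; move: (none x); rewrite hx eqxx.
Qed.

Definition lift_mor (a : sobj M) : VMor (fobj W a) (fobj X a).
Proof.
refine (@Build_VMor gT _ _ (@lift_fun a) _ _ _).
- by apply: (i_inj a); rewrite lift_funE !vfun0.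
- by move=> g w; apply: (i_inj a); rewrite vfunE !lift_funE vfunE.
- move=> w1 w2 e nz.
  have e' : ap u a w1 = ap u a w2 by rewrite -!lift_funE e.
  apply: (vfun_orb e') => h; apply: nz; apply: (i_inj a).
  by rewrite lift_funE h vfun0.
Defined.

Definition lift_inj : VNat W X.
Proof.
refine (@Build_VNat gT M W X lift_mor _).
by move=> a b f w /=; apply: (i_inj b); rewrite !lift_funE !ntnat !lift_funE.
Defined.

Lemma lift_injE a w : ap i a (ap lift_inj a w) = ap u a w.
Proof. exact: lift_funE. Qed.

End LiftAlongInjective.

Section DescendAlongSurjective.
Variables (Y Y' W : VF) (q : VNat Y Y') (u : VNat Y W).
Local Unset Implicit Arguments.
Hypotheses (q_surj : pointwise_surj q)
  (u_ker : forall a y, ap q a y = vzero _ -> ap u a y = vzero _).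
Local Set Implicit Arguments.

Lemma u_constant_on_fibers a y1 y2 : ap q a y1 = ap q a y2 -> ap u a y1 = ap u a y2.
Proof. exact: (@vfun_eq_ker_sub _ _ _ _ (ntc q a) (ntc u a) (@u_ker a)). Qed.

Definition desc_fun (a : sobj M) (y' : vcar (fobj Y' a)) : vcar (fobj W a) :=
  if [pick y | ap q a y == y'] is Some y then ap u a y else vzero _.

Lemma desc_funE a y : desc_fun (ap q a y) = ap u a y.
Proof.
rewrite /desc_fun; case: pickP => [y0 /eqP /u_constant_on_fibers //|none].
by move: (none y); rewrite eqxx.
Qed.

Definition desc_mor (a : sobj M) : VMor (fobj Y' a) (fobj W a).
Proof.
refine (@Build_VMor gT _ _ (@desc_fun a) _ _ _).
- by rewrite -(vfun0 (ntc q a)) desc_funE vfun0.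
- by move=> g y'; have [y <-] := q_surj a y'; rewrite -vfunE !desc_funE vfunE.
- move=> y1' y2'; have [y1 <-] := q_surj a y1'; have [y2 <-] := q_surj a y2'.
  rewrite !desc_funE => e nz; have [g eg] := vfun_orb e nz.
  by exists g; rewrite eg vfunE.
Defined.

Definition desc_surj : VNat Y' W.
Proof.
refine (@Build_VNat gT M Y' W desc_mor _).
move=> a b f y' /=; have [y <-] := q_surj a y'.
by rewrite -ntnat !desc_funE ntnat.
Defined.

Lemma desc_surjE a y : ap desc_surj a (ap q a y) = ap u a y.
Proof. exact: desc_funE. Qed.

End DescendAlongSurjective.

Lemma is_monoP (F F' : VF) (t : VNat F F') :
  is_mono (C:=C) t <-> pointwise_inj t.
Proof.
split=> [t_mono a|t_inj X g h tg_th a x]; last exact: t_inj (tg_th a x).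
apply: vfun_inj_ker0 => x tx0.
pose K := sf_preimage t (sf_zero F').
have incl0 : VNat_eq (SubIncl K) (VNat0 _ _).
  by apply: t_mono => b e /=; rewrite vfun0; apply/eqP/(valP e).
have Kx : K a x by rewrite /= tx0.
exact: (incl0 a (exist _ x Kx)).
Qed.

Lemma is_epiP (F F' : VF) (t : VNat F F') :
  is_epi (C:=C) t <-> pointwise_surj t.
Proof.
split=> [t_epi a y|t_surj X g h gt_ht a y]; last first.
  by have [x <-] := t_surj a y; exact: gt_ht a x.
pose pi := QuotPi (sf_image t).
have pi0 : VNat_eq pi (VNat0 _ _).
  by apply: t_epi => b x; apply/QuotPi_eq0/sf_imageP; exists x.
exact/sf_imageP/QuotPi_eq0/(pi0 a y).
Qed.

Definition preim_in_im (X Y X' Y' : VF) (i : VNat X Y) (q : VNat Y Y')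
  (j : VNat X' Y') : Prop :=
  forall a y x', ap q a y = ap j a x' -> exists x, ap i a x = y.

Section PreimageProjection.
Variables (Y X' Y' : VF) (q : VNat Y Y') (j : VNat X' Y').
Local Unset Implicit Arguments.
Hypothesis j_inj : pointwise_inj j.
Local Set Implicit Arguments.

Lemma preim_sf_im b (e : vcar (fobj (SubF (sf_preimage q (sf_image j))) b)) :
  exists x', ap j b x' = ap (VNat_comp q (SubIncl _)) b e.
Proof. by have /sf_imageP := valP e. Qed.

Definition preim_proj : VNat (SubF (sf_preimage q (sf_image j))) X' :=
  lift_inj j_inj preim_sf_im.

Lemma preim_projE a e : ap j a (ap preim_proj a e) = ap q a (val e).
Proof. exact: lift_injE. Qed.

End PreimageProjection.

Section Squares.
Variables (X Y X' Y' : VF) (i : VNat X Y) (p : VNat X X') (q : VNat Y Y')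
  (j : VNat X' Y').

Lemma pushout_preim_in_im : is_pushout (C:=C) i p q j -> preim_in_im i q j.
Proof.
move=> [_ po] a y x' qy.
pose pi := QuotPi (sf_image i).
have [|w [[wq wj] _]] := po _ pi (VNat0 _ _).
  by move=> b x; apply/QuotPi_eq0/sf_imageP; exists x.
apply/sf_imageP/QuotPi_eq0.
by rewrite -(wq a y) /= qy; exact: wj a x'.
Qed.

Local Unset Implicit Arguments.
Hypothesis j_inj : pointwise_inj j.
Local Set Implicit Arguments.

Lemma pullback_preim_in_im : is_pullback (C:=C) i p q j -> preim_in_im i q j.
Proof.
move=> [_ pb] a y x' qy.
pose S := sf_preimage q (sf_image j).
have [|w [[iw _] _]] := pb _ (SubIncl S) (preim_proj q j_inj).
  by move=> b e; exact: (esym (preim_projE j_inj e)).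
have Sy : S a y by apply/sf_imageP; exists x'.
by exists (ap w a (exist _ y Sy)); exact: iw a (exist _ y Sy).
Qed.

Local Unset Implicit Arguments.
Hypotheses (i_inj : pointwise_inj i) (p_surj : pointwise_surj p)
  (q_surj : pointwise_surj q)
  (sq : comm_sq (C:=C) i p q j) (piq : preim_in_im i q j).
Local Set Implicit Arguments.

Let sqE : forall a x, ap q a (ap i a x) = ap j a (ap p a x) := sq.

Lemma preim_in_im_pullback : is_pullback (C:=C) i p q j.
Proof.
split=> // W u v quv.
have u_im a w : exists x, ap i a x = ap u a w by exact: piq (quv a w).
pose w := lift_inj i_inj u_im.
have iw a x : ap i a (ap w a x) = ap u a x := lift_injE i_inj u_im x.
exists w; split; first split.
- exact: iw.
- move=> a x /=; apply: (j_inj a); rewrite -sqE iw.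
  exact: (quv a x).
- by move=> w' iw' _ a x; apply: (i_inj a); rewrite iw; exact: iw' a x.
Qed.

Lemma preim_in_im_pushout : is_pushout (C:=C) i p q j.
Proof.
split=> // W u v uv.
have uvE : forall a x, ap u a (ap i a x) = ap v a (ap p a x) := uv.
have u_ker a y : ap q a y = vzero _ -> ap u a y = vzero _.
  move=> qy; have [|x ixy] := piq a y (vzero _); first by rewrite qy vfun0.
  have px : ap p a x = vzero _ by apply: (j_inj a); rewrite vfun0 -sqE ixy.
  by rewrite -ixy uvE px vfun0.
pose w := desc_surj q_surj u_ker.
have wq a y : ap w a (ap q a y) = ap u a y := desc_surjE q_surj u_ker y.
exists w; split; first split.
- exact: wq.
- move=> a x'; have [x <-] := p_surj a x'.
  by have := wq a (ap i a x); rewrite sqE uvE.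
- move=> w' w'q _ a y'; have [y <-] := q_surj a y'.
  by rewrite wq; exact: w'q.
Qed.

End Squares.

Lemma preim_in_im_bicartesian (X Y X' Y' : VF) (i : VNat X Y) (p : VNat X X')
    (q : VNat Y Y') (j : VNat X' Y') :
  pointwise_inj i -> pointwise_inj j -> pointwise_surj p -> pointwise_surj q ->
  comm_sq (C:=C) i p q j -> preim_in_im i q j -> is_bicartesian (C:=C) i p q j.
Proof.
by move=> *; split; [exact: preim_in_im_pullback | exact: preim_in_im_pushout].
Qed.

Lemma VFun0_is_zero : is_zero_obj (C:=C) VFun0.
Proof.
move=> F; split.
  exists (VNat0 VFun0 F) => t a [] /=.
  by rewrite -[tt]/(vzero (VUnit gT)) vfun0.
by exists (VNat0 F VFun0) => t a x /=; case: (ap t a x).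
Qed.

Lemma iso_inj_surj (F F' : VF) (t : VNat F F') : is_iso (C:=C) t ->
  pointwise_inj t /\ pointwise_surj t.
Proof.
move=> [s [st ts]]; split=> a.
  by move=> x1 x2 e; rewrite -[x1](st a) -[x2](st a) /= e.
by move=> y; exists (ap s a y); exact: ts a y.
Qed.

Lemma cospan_completion (Y X' Y' : VF) (q : VNat Y Y') (j : VNat X' Y') :
  pointwise_inj j -> pointwise_surj q ->
  exists (X : VF) (i : VNat X Y) (p : VNat X X'),
    pointwise_inj i /\ pointwise_surj p /\
    is_bicartesian (C:=C) i p q j.
Proof.
move=> j_inj q_surj.
pose S := sf_preimage q (sf_image j).
pose p := preim_proj q j_inj.
have pE a e : ap j a (ap p a e) = ap q a (val e) := preim_projE j_inj e.
have p_surj a x' : exists e, ap p a e = x'.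
  have [y qy] := q_surj a (ap j a x').
  have Sy : S a y by apply/sf_imageP; exists x'.
  by exists (exist _ y Sy); apply: (j_inj a); rewrite pE.
exists (SubF S), (SubIncl S), p; split; first by move=> a; exact: val_inj.
split=> //; apply: preim_in_im_bicartesian => //.
- by move=> a; exact: val_inj.
- by move=> a e; exact: (esym (pE a e)).
- move=> a y x' qy; have Sy : S a y by apply/sf_imageP; exists x'.
  by exists (exist _ y Sy).
Qed.

Lemma span_completion (X Y X' : VF) (i : VNat X Y) (p : VNat X X') :
  pointwise_inj i -> pointwise_surj p ->
  exists (Y' : VF) (q : VNat Y Y') (j : VNat X' Y'),
    pointwise_inj j /\ pointwise_surj q /\
    is_bicartesian (C:=C) i p q j.
Proof.
move=> i_inj p_surj.
pose S := sf_image (VNat_comp i (SubIncl (sf_preimage p (sf_zero X')))).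
have SP a y : S a y <-> exists2 x, ap p a x = vzero _ & ap i a x = y.
  split=> [/sf_imageP [e ixy]|[x px ixy]].
    by exists (val e); [exact/eqP/(valP e) | exact: ixy].
  by apply/sf_imageP; exists (exist _ x (introT eqP px)).
have Si a x : S a (ap i a x) -> ap p a x = vzero _.
  by move=> /SP [x0 px0 /(i_inj a) <-].
pose pi := QuotPi S.
have pi_ker a x : ap p a x = vzero _ -> ap (VNat_comp pi i) a x = vzero _.
  by move=> px; apply/QuotPi_eq0/SP; exists x.
pose j := desc_surj p_surj pi_ker.
have jE a x : ap j a (ap p a x) = ap pi a (ap i a x) := desc_surjE p_surj pi_ker x.
have j_inj : pointwise_inj j.
  move=> a x1' x2'; have [x1 <-] := p_surj a x1'; have [x2 <-] := p_surj a x2'.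
  rewrite !jE => /QuotPi_eq [/(i_inj a) -> //|[/Si -> /Si ->]] //.
exists (QuotF S), pi, j; split=> //; split; first exact: QuotPi_surj.
apply: preim_in_im_bicartesian => //; first exact: QuotPi_surj.
- by move=> a x; exact: (esym (jE a x)).
- move=> a y x'; have [x <-] := p_surj a x'; rewrite jE.
  by move=> /QuotPi_eq [->|[/SP [x0 _ <-] _]]; [exists x | exists x0].
Qed.

Lemma FunCat_proto_abelian : proto_abelian C.
Proof.
split.
  exists VFun0; split; first exact: VFun0_is_zero.
  split=> x t; first by apply/is_monoP => a [] [].
  by apply/is_epiP => a []; exists (vzero _); case: (ap t a (vzero _)).
split.
  by move=> a b t /iso_inj_surj [t_inj t_surj]; split; [apply/is_monoP|apply/is_epiP].
split.
  by move=> a b c f g f_mono g_mono W u v e; apply: f_mono; apply: g_mono.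
split.
  by move=> a b c f g f_epi g_epi W u v e; apply: g_epi; apply: f_epi.
split.
  move=> X Y X' Y' i p q j /is_monoP i_inj /is_monoP j_inj /is_epiP p_surj
    /is_epiP q_surj sq; split=> [/pullback_preim_in_im | /pushout_preim_in_im] piq.
    by apply: preim_in_im_pushout; auto.
  by apply: preim_in_im_pullback; auto.
split.
  move=> Y X' Y' q j /is_monoP j_inj /is_epiP q_surj.
  have [X [i [p [i_inj [p_surj sq]]]]] := cospan_completion j_inj q_surj.
  by exists X, i, p; split; [apply/is_monoP | split; first apply/is_epiP].
move=> X Y X' i p /is_monoP i_inj /is_epiP p_surj.
have [Y' [q [j [j_inj [q_surj sq]]]]] := span_completion i_inj p_surj.
by exists Y', q, j; split; [apply/is_monoP | split; first apply/is_epiP].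
Qed.

End FunctorCategory.

(** * Finiteness of Hom- and Ext-sets *)

Lemma In_pmap (T X : Type) (f : T -> option X) (s : seq T) x :
  List.In x (pmap f s) -> exists v, f v = Some x.
Proof.
elim: s => [|v s IH] //=; case E: (f v) => [y|] //=.
by move=> [<-|/IH //]; exists v.
Qed.

Lemma pmap_In (T : eqType) (X : Type) (f : T -> option X) (s : seq T) v x :
  v \in s -> f v = Some x -> List.In x (pmap f s).
Proof.
elim: s => [|w s IH] //=; rewrite inE => /predU1P [<- ->|vs fv]; first by left.
by case: (f w) => [y|] /=; [right|]; exact: IH vs fv.
Qed.

(* Choice picks one representative in each fibre of the finite-valued code [c]. *)
Lemma finite_cover_of_code (X : Type) (P : X -> Prop) (R : X -> X -> Prop)
    (T : finType) (c : X -> T) :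
  (forall x y, P x -> P y -> c x = c y -> R x y) ->
  exists l : list X, (forall x, List.In x l -> P x) /\
    forall x, P x -> exists y, List.In y l /\ R x y.
Proof.
move=> codeR.
pose rep (v : T) : option X :=
  match excluded_middle_informative (exists x, P x /\ c x = v) with
  | left h => Some (proj1_sig (constructive_indefinite_description _ h))
  | right _ => None end.
have repP v x : rep v = Some x -> P x /\ c x = v.
  rewrite /rep; case: excluded_middle_informative => // h [<-].
  exact: proj2_sig (constructive_indefinite_description _ h).
exists (pmap rep (enum T)); split=> [x lx|x Px].
  by have [v /repP []] := In_pmap lx.
have : rep (c x) <> None.
  by rewrite /rep; case: excluded_middle_informative => // -[]; exists x.
case E: (rep (c x)) => [y|] // _; have [Py cy] := repP _ _ E.
by exists y; split; [apply: (pmap_In (v := c x)); rewrite ?mem_enum | exact: codeR].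
Qed.

Lemma In_tnth (T : Type) (l : list T) x :
  List.In x l -> exists k : 'I_(size l), tnth (in_tuple l) k = x.
Proof.
elim: l => [|y l IH] //= [<-|/IH [k <-]]; first by exists ord0; rewrite (tnth_nth y).
have k1 : k.+1 < size (y :: l) by rewrite /= ltnS.
by exists (Ordinal k1); rewrite !(tnth_nth y).
Qed.

Section Extensions.
Variables (gT : finGroupType) (M : SCat).
Local Notation VF := (VFun gT M).
Local Notation C := (FunCat gT M).
Local Notation ap t a := (vfun (ntc t a)).
Local Notation fm F f := (vfun (fmor F f)).

Lemma zero_obj_trivial (z : VF) : is_zero_obj (C:=C) z ->
  forall a (w : vcar (fobj z a)), w = vzero _.
Proof.
move=> z0 a w; have [[f f_uniq] _] := z0 z.
have idE : forall a x, ap (VNat_id z) a x = ap f a x := f_uniq (VNat_id z).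
have zeroE : forall a x, ap (VNat0 z z) a x = ap f a x := f_uniq (VNat0 z z).
by have := idE a w; rewrite -zeroE.
Qed.

Variables (A Cc : VF).

Definition pointwise_exact (B : VF) (i : VNat A B) (p : VNat B Cc) : Prop :=
  [/\ pointwise_inj i, pointwise_surj p,
      forall a x, ap p a (ap i a x) = vzero _ &
      forall a y, ap p a y = vzero _ -> exists x, ap i a x = y].

Lemma adm_ses_exact (z : VF) (s : ses_data (C:=C) A Cc) :
  is_zero_obj (C:=C) z -> is_adm_ses (@is_mono C) (@is_epi C) z s ->
  pointwise_exact (ses_i s) (ses_p s).
Proof.
move=> z0 [/is_monoP i_inj [/is_epiP p_surj [u [v [pb _]]]]].
have zE := zero_obj_trivial z0.
have sqE : forall a x, ap (ses_p s) a (ap (ses_i s) a x) = ap v a (ap u a x).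
  exact: pb.1.
have v_inj : pointwise_inj v by move=> a w1 w2 _; rewrite (zE _ w1) (zE _ w2).
split=> // [a x|a y py]; first by rewrite sqE (zE _ (ap u a x)) vfun0.
by apply: (pullback_preim_in_im v_inj pb (x' := vzero _)); rewrite py vfun0.
Qed.

Section Coordinates.
Variables (B : VF) (i : VNat A B) (p : VNat B Cc).

Definition ses_coord (a : sobj M) (y : vcar (fobj B a)) :
    (vcar (fobj A a) + vcar (fobj Cc a))%type :=
  if [pick x | ap i a x == y] is Some x then inl x else inr (ap p a y).

Definition ses_sec (a : sobj M) (c : vcar (fobj Cc a)) : vcar (fobj B a) :=
  odflt (vzero _) [pick y | ap p a y == c].

Definition sum_act (a : sobj M) g (v : (vcar (fobj A a) + vcar (fobj Cc a))%type) :=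
  match v with inl x => inl (vact g x) | inr c => inr (vact g c) end.

Lemma ses_secK a (y : vcar (fobj B a)) :
  ap p a y <> vzero _ -> ses_sec (ap p a y) = y.
Proof.
rewrite /ses_sec; case: pickP => [y0 /eqP e|/(_ y)]; last by rewrite eqxx.
by move=> nz /=; apply: (vfun_inj_nz e); rewrite e.
Qed.

Hypothesis exact_ip : pointwise_exact i p.

Lemma ses_coord_i a x : ses_coord (ap i a x) = inl x.
Proof.
have [i_inj _ _ _] := exact_ip.
rewrite /ses_coord; case: pickP => [x0 /eqP /i_inj -> //|none].
by move: (none x); rewrite eqxx.
Qed.

Lemma ses_coordP a (y : vcar (fobj B a)) :
  (exists2 x, ap i a x = y & ses_coord y = inl x) \/
  (ap p a y <> vzero _ /\ ses_coord y = inr (ap p a y)).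
Proof.
have [_ _ pi0 ker_p] := exact_ip.
have [/ker_p [x ixy]|py] := eqVneq (ap p a y) (vzero _).
  by left; exists x; rewrite // -ixy ses_coord_i.
right; split; first exact/eqP.
rewrite /ses_coord; case: pickP => [x0 /eqP ixy|//].
by move: py; rewrite -ixy pi0 eqxx.
Qed.

Lemma ses_coord_p a (y : vcar (fobj B a)) :
  (if ses_coord y is inr c then c else vzero _) = ap p a y.
Proof.
have [_ _ pi0 _] := exact_ip.
by case: (ses_coordP y) => [[x <- ->]|[_ ->]] //; rewrite pi0.
Qed.

Lemma ses_coord_inj a : injective (@ses_coord a).
Proof.
move=> y1 y2 e.
case: (ses_coordP y1) => [[x1 ix1 e1]|[n1 e1]];
case: (ses_coordP y2) => [[x2 ix2 e2]|[n2 e2]]; rewrite e1 e2 in e; try discriminate.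
  by case: e => x12; rewrite -ix1 -ix2 x12.
by case: e => e; apply: (vfun_inj_nz e).
Qed.

Lemma ses_coordJ a g (y : vcar (fobj B a)) :
  ses_coord (vact g y) = sum_act g (ses_coord y).
Proof.
have [_ _ pi0 _] := exact_ip.
case: (ses_coordP y) => [[x <- ->]|[py ->]]; first by rewrite -vfunE ses_coord_i.
case: (ses_coordP (vact g y)) => [[x ixy _]|[_ ->]]; last by rewrite vfunE.
by case: py; rewrite -(vactK g y) -ixy -vfunE pi0.
Qed.

Lemma ses_coord_onto a (v : (vcar (fobj A a) + vcar (fobj Cc a))%type) :
  (if v is inr c then c <> vzero _ else True) -> exists y, ses_coord y = v.
Proof.
have [_ p_surj pi0 _] := exact_ip.
case: v => [x _|c c0]; first by exists (ap i a x); rewrite ses_coord_i.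
have [y py] := p_surj a c; exists y.
case: (ses_coordP y) => [[x ixy _]|[_ ->]]; last by rewrite py.
by case: c0; rewrite -py -ixy pi0.
Qed.

Lemma ses_coord_nz a (y : vcar (fobj B a)) :
  if ses_coord y is inr c then c <> vzero _ else True.
Proof. by case: (ses_coordP y) => [[x _ ->]|[py ->]]. Qed.

End Coordinates.

Section Transport.
Variables (B1 : VF) (i1 : VNat A B1) (p1 : VNat B1 Cc).
Variables (B2 : VF) (i2 : VNat A B2) (p2 : VNat B2 Cc).
Hypotheses (exact1 : pointwise_exact i1 p1) (exact2 : pointwise_exact i2 p2).
Hypothesis same_glue : forall a b (f : shom a b) (c : vcar (fobj Cc a)),
  ses_coord i1 p1 (fm B1 f (ses_sec p1 c)) = ses_coord i2 p2 (fm B2 f (ses_sec p2 c)).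

Definition transport_fun (a : sobj M) (y : vcar (fobj B1 a)) : vcar (fobj B2 a) :=
  if [pick y' | ses_coord i2 p2 y' == ses_coord i1 p1 y] is Some y' then y'
  else vzero _.

Lemma transport_funE a y : ses_coord i2 p2 (@transport_fun a y) = ses_coord i1 p1 y.
Proof.
rewrite /transport_fun; case: pickP => [y' /eqP //|none].
have [y' hy'] := ses_coord_onto exact2 (ses_coord_nz exact1 y).
by move: (none y'); rewrite hy' eqxx.
Qed.

Definition transport_mor (a : sobj M) : VMor (fobj B1 a) (fobj B2 a).
Proof.
refine (@Build_VMor gT _ _ (@transport_fun a) _ _ _).
- apply: (ses_coord_inj exact2); rewrite transport_funE.
  by rewrite -(vfun0 (ntc i1 a)) -(vfun0 (ntc i2 a)) !ses_coord_i.
- move=> g y; apply: (ses_coord_inj exact2).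
  by rewrite transport_funE !ses_coordJ // transport_funE.
- move=> y1 y2 e _; exists 1; rewrite vact1.
  by apply: (ses_coord_inj exact1); rewrite -!transport_funE e.
Defined.

Lemma transport_i a x : transport_fun (ap i1 a x) = ap i2 a x.
Proof.
by apply: (ses_coord_inj exact2); rewrite transport_funE !ses_coord_i.
Qed.

Lemma transport_p a y : ap p2 a (transport_fun y) = ap p1 a y.
Proof. by rewrite -(ses_coord_p exact2) transport_funE (ses_coord_p exact1). Qed.

Definition transport : VNat B1 B2.
Proof.
refine (@Build_VNat gT M B1 B2 transport_mor _) => a b f y /=.
case: (ses_coordP exact1 y) => [[x <- _]|[py _]].
  by rewrite transport_i -!ntnat transport_i.
have py2 : ap p2 a (transport_fun y) <> vzero _ by rewrite transport_p.
apply: (ses_coord_inj exact2); rewrite transport_funE.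
have := same_glue f (ap p1 a y).
by rewrite (ses_secK py) -transport_p (ses_secK py2).
Defined.

Lemma transportE a y : ses_coord i2 p2 (ap transport a y) = ses_coord i1 p1 y.
Proof. exact: transport_funE. Qed.

End Transport.

End Extensions.

Section Finiteness.
Variables (gT : finGroupType) (M : SCat).
Local Notation VF := (VFun gT M).
Local Notation C := (FunCat gT M).
Local Notation ap t a := (vfun (ntc t a)).
Local Notation fm F f := (vfun (fmor F f)).

Variable objs : list (sobj M).
Hypothesis objs_all : forall a, List.In a objs.

Definition obj_at (k : 'I_(size objs)) : sobj M := tnth (in_tuple objs) k.

Lemma FunCat_hom_finite (F F' : VF) : hom_finite (C:=C) F F'.
Proof.
pose code (t : VNat F F') : {dffun forall k : 'I_(size objs),
    {ffun vcar (fobj F (obj_at k)) -> vcar (fobj F' (obj_at k))}} :=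
  [ffun k => [ffun x => ap t (obj_at k) x]].
have [|l [_ l_all]] := @finite_cover_of_code _ (fun _ => True) (@VNat_eq gT M F F') _ code.
  move=> s t _ _ /ffunP st a; have [k <-] := In_tnth (objs_all a).
  by move=> x; move/ffunP: (st k) => /(_ x); rewrite !ffunE.
by exists l => t; exact: l_all.
Qed.

Variable homs : forall a b : sobj M, list (shom a b).
Hypothesis homs_all : forall a b (f : shom a b), List.In f (homs a b).

Local Notation arrow_index :=
  {k : 'I_(size objs) & {k' : 'I_(size objs) & 'I_(size (homs (obj_at k) (obj_at k')))}}.

Definition arrow_at (u : arrow_index) : shom (obj_at (tag u)) (obj_at (tag (tagged u))) :=
  tnth (in_tuple (homs _ _)) (tagged (tagged u)).

Definition ses_code (A Cc : VF) (s : ses_data (C:=C) A Cc) :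
  {dffun forall u : arrow_index, {ffun vcar (fobj Cc (obj_at (tag u))) ->
     (vcar (fobj A (obj_at (tag (tagged u)))) +
      vcar (fobj Cc (obj_at (tag (tagged u)))))%type}} :=
  [ffun u => [ffun c => ses_coord (ses_i s) (ses_p s)
     (fm (ses_mid s) (arrow_at u) (ses_sec (ses_p s) c))]].

Lemma ses_code_glue (A Cc : VF) (s t : ses_data (C:=C) A Cc) :
  ses_code s = ses_code t ->
  forall a b (f : shom a b) (c : vcar (fobj Cc a)),
  ses_coord (ses_i s) (ses_p s) (fm (ses_mid s) f (ses_sec (ses_p s) c)) =
  ses_coord (ses_i t) (ses_p t) (fm (ses_mid t) f (ses_sec (ses_p t) c)).
Proof.
move=> /ffunP st a b.
have [k <-] := In_tnth (objs_all a); have [k' <-] := In_tnth (objs_all b).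
move=> f; have [m <-] := In_tnth (homs_all f); move=> c.
move/ffunP: (st (existT _ k (existT _ k' m))) => /(_ c).
by rewrite !ffunE.
Qed.

Lemma FunCat_ext_finite (z : VF) (A Cc : VF) : is_zero_obj (C:=C) z ->
  ext_finite (@is_mono C) (@is_epi C) z A Cc.
Proof.
move=> z0; apply: (@finite_cover_of_code _ _ _ _ (@ses_code A Cc)).
move=> s t /(adm_ses_exact z0) exact_s /(adm_ses_exact z0) exact_t st.
have glue_st := ses_code_glue st.
have glue_ts a b f c := esym (@glue_st a b f c).
pose to := transport exact_s exact_t glue_st.
pose from := transport exact_t exact_s glue_ts.
have coord_to := transportE exact_s exact_t glue_st.
have coord_from := transportE exact_t exact_s glue_ts.
exists to; split; [exists from; split | split] => a y.
- by apply: (ses_coord_inj exact_s); rewrite coord_from coord_to.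
- by apply: (ses_coord_inj exact_t); rewrite coord_to coord_from.
- exact: transport_i.
- exact: transport_p.
Qed.

End Finiteness.

Lemma FunCat_finitary (gT : finGroupType) (M : SCat) : finite_scat M ->
  finitary (@is_mono (FunCat gT M)) (@is_epi (FunCat gT M)).
Proof.
move=> [[objs objs_all] homs_fin].
pose homs a b := proj1_sig (constructive_indefinite_description _ (homs_fin a b)).
have homs_all a b : forall f : shom a b, List.In f (homs a b).
  exact: proj2_sig (constructive_indefinite_description _ (homs_fin a b)).
split=> [F F'|z z0 A Cc]; first exact: FunCat_hom_finite objs_all F F'.
exact: (FunCat_ext_finite objs_all homs_all).
Qed.

Theorem mainTheorem4 (gT : finGroupType) (M : SCat) :
  abelian [set: gT] ->
  proto_abelian (FunCat gT M) /\
  (finite_scat M ->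
     @finitary (FunCat gT M) (@is_mono (FunCat gT M)) (@is_epi (FunCat gT M))).
Proof.
by move=> _; split; [exact: FunCat_proto_abelian | exact: FunCat_finitary].
Qed.
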